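(* Let $G$ and $H$ be finitely generated residually finite groups, let $S$ be a finite symmetric generating set of $G\times H$, and let $(X_n)_{n\ge0}$ be the lazy random walk on $\mathrm{Cay}(G\times H,S)$. Write $X_n=(Y_n,Z_n)$ with $Y_n\in G$, $Z_n\in H$. Then for all $k\ge0$ and all $n$, $$\mathbb{P}[D_{G\times H}(X_n)>k]\le\mathbb{P}[D_G(Y_n)>k]+\mathbb{P}[D_H(Z_n)>k].$$
   Context: For a group $\Gamma$ and $g\ne e$, $D_\Gamma(g)=\min\{[\Gamma:N]: N\lhd\Gamma\text{ of finite index},\ g\notin N\}$, and $D_\Gamma(e)=0$. The lazy random walk on $\mathrm{Cay}(\Gamma,S)$ is the Markov chain with $X_0=e$ and transition matrix $\frac12I+\frac12P$, $P(x,y)=\frac1{|S|}\#\{s\in S:y=xs\}$. *)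

From mathcomp Require Import all_boot all_algebra.
From Stdlib Require ClassicalEpsilon List.
Set Implicit Arguments. Unset Strict Implicit. Unset Printing Implicit Defensive.
Import GRing.Theory Num.Theory.

Record group := Group {
  gT :> Type;
  gmul : gT -> gT -> gT;
  gone : gT;
  ginv : gT -> gT;
  gmulA : forall x y z, gmul x (gmul y z) = gmul (gmul x y) z;
  gmul1 : forall x, gmul x gone = x;
  g1mul : forall x, gmul gone x = x;
  gmulV : forall x, gmul x (ginv x) = gone;
  gVmul : forall x, gmul (ginv x) x = gone
}.

Arguments gmul {g}. Arguments gone {g}. Arguments ginv {g}.

Definition prod_group (G H : group) : group.
Proof.
refine (@Group (gT G * gT H)%type
  (fun x y => (gmul x.1 y.1, gmul x.2 y.2)) (gone, gone)
  (fun x => (ginv x.1, ginv x.2)) _ _ _ _ _).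
- by move=> [? ?] [? ?] [? ?] /=; rewrite !gmulA.
- by move=> [? ?] /=; rewrite !gmul1.
- by move=> [? ?] /=; rewrite !g1mul.
- by move=> [? ?] /=; rewrite !gmulV.
- by move=> [? ?] /=; rewrite !gVmul.
Defined.

Definition generated (G : group) (A : G -> Prop) (x : G) : Prop :=
  forall P : G -> Prop, P gone -> (forall a b, P a -> P b -> P (gmul a b)) ->
    (forall a, P a -> P (ginv a)) -> (forall a, A a -> P a) -> P x.

Definition generates (G : group) (S : seq G) : Prop :=
  forall x : G, generated (fun a => List.In a S) x.

Definition finitely_generated (G : group) : Prop :=
  exists S : seq G, generates S.

Definition symmetric_set (G : group) (S : seq G) : Prop :=
  forall s, List.In s S -> List.In (ginv s) S.

Definition normal_subgroup (G : group) (N : G -> Prop) : Prop :=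
  [/\ N gone, (forall a b, N a -> N b -> N (gmul a b)), (forall a, N a -> N (ginv a))
    & (forall g a, N a -> N (gmul (ginv g) (gmul a g)))].

Definition has_index (G : group) (N : G -> Prop) (k : nat) : Prop :=
  exists r : 'I_k -> G, forall x : G, exists! i : 'I_k, N (gmul (ginv (r i)) x).

Definition residually_finite (G : group) : Prop :=
  forall g : G, g <> gone ->
    exists N k, [/\ normal_subgroup N, has_index N k & ~ N g].

Definition is_D (G : group) (g : G) (d : nat) : Prop :=
  (g = gone /\ d = 0%N) \/
  (g <> gone /\
   (exists N, [/\ normal_subgroup N, has_index N d & ~ N g]) /\
   (forall N k, normal_subgroup N -> has_index N k -> ~ N g -> (d <= k)%N)).

Definition D (G : group) (g : G) : nat :=
  ClassicalEpsilon.epsilon (inhabits 0%N) (is_D g).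

(* Lazy random walk: at each step, stay (prob 1/2) or multiply on the right
   by the i-th element of S (prob 1/(2|S|)). A trajectory of length n is
   encoded by its sequence of choices. *)
Definition step (G : group) (S : seq G) (x : G) (c : option 'I_(size S)) : G :=
  match c with None => x | Some i => gmul x (nth gone S i) end.

Definition walk (G : group) (S : seq G) (n : nat)
  (w : {ffun 'I_n -> option 'I_(size S)}) : G :=
  foldl (@step G S) gone [seq w j | j <- enum 'I_n].

Definition step_weight (G : group) (S : seq G) (c : option 'I_(size S)) : rat :=
  match c with None => 1 / 2 | Some _ => 1 / (2 * (size S)%:R) end.

Definition walk_prob (G : group) (S : seq G) (n : nat) (E : G -> bool) : rat :=
  \sum_(w : {ffun 'I_n -> option 'I_(size S)})
     (\prod_(j < n) @step_weight G S (w j)) * (E (@walk G S n w))%:R.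

From mathcomp Require Import all_boot all_algebra.
From Stdlib Require Import Classical Wf_nat.
Set Implicit Arguments. Unset Strict Implicit.
Import GRing.Theory Num.Theory.

(* If N is a normal subgroup of finite index of H not containing z, its preimage
   G x N under the projection is a normal subgroup of G x H of the same index not
   containing (y, z); hence D(y, z) <= D(z) whenever z <> 1, and symmetrically
   D(y, z) <= D(y) whenever y <> 1.  So D(X_n) > k forces D(Y_n) > k or
   D(Z_n) > k, and the claim is a union bound over the trajectories of the walk. *)

Lemma walk_prob_le_add (G : group) (S : seq G) (n : nat) (E E1 E2 : G -> bool) :
  (forall x, E x -> E1 x || E2 x) ->
  (walk_prob S n E <= walk_prob S n E1 + walk_prob S n E2)%R.
Proof.
move=> sub_E; rewrite /walk_prob -big_split /=; apply: ler_sum => w _.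
have weight_ge0 : (0 <= \prod_(j < n) step_weight (w j))%R.
  apply: prodr_ge0 => j _.
  by case: (w j) => [i|] /=; rewrite divr_ge0 // ?mulr_ge0 // ler0n.
rewrite -mulrDr ler_wpM2l //.
case E_w: (E _); last by rewrite addr_ge0 ?ler0n.
by case/orP: (sub_E _ E_w) => -> /=; rewrite ?lerDl ?lerDr ler0n.
Qed.

Section DepthFunction.

Variable G : group.

Definition separating_index (g : G) (k : nat) : Prop :=
  exists N, [/\ normal_subgroup N, has_index N k & ~ N g].

Lemma D_spec (g : G) : (exists d, is_D g d) -> is_D g (D g).
Proof. by move=> exD; apply: (ClassicalEpsilon.epsilon_spec (inhabits 0%N) (is_D g) exD). Qed.

Lemma D_gone : D (gone : G) = 0%N.
Proof. by case: (D_spec (ex_intro _ 0%N (or_introl (conj erefl erefl)))) => [[_ ->]|[]]. Qed.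

Lemma D_nontrivial (g : G) k : g <> gone -> separating_index g k ->
  separating_index g (D g) /\ forall k', separating_index g k' -> (D g <= k')%N.
Proof.
move=> g_ne1 sep_k.
have [d [[sep_d d_least] _]] := dec_inh_nat_subset_has_unique_least_element
  (separating_index g) (fun n => classic (separating_index g n)) (ex_intro _ k sep_k).
have [[/g_ne1 //]|[_ [[N [N_nrm N_idx N_g]] D_least]]] : is_D g (D g).
  apply: D_spec; exists d; right; do 2!split=> //.
  by move=> N k' ? ? ?; apply/leP/d_least; exists N.
split=> [|k' [N' [N'_nrm N'_idx N'_g]]]; first by exists N.
exact: D_least N'_nrm N'_idx N'_g.
Qed.

Lemma D_min (g : G) N k : g <> gone -> normal_subgroup N -> has_index N k -> ~ N g ->
  (D g <= k)%N.
Proof.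
move=> g_ne1 N_nrm N_idx N_g; have sep_k : separating_index g k by exists N.
exact: (D_nontrivial g_ne1 sep_k).2 k sep_k.
Qed.

Lemma D_witness (g : G) : residually_finite G -> g <> gone -> separating_index g (D g).
Proof.
move=> rf g_ne1; have [N [k N_sep]] := rf g g_ne1.
have sep_k : separating_index g k by exists N.
exact: (D_nontrivial g_ne1 sep_k).1.
Qed.

End DepthFunction.

Section Pullback.

Variables (G K : group) (f : G -> K) (s : K -> G).
Hypotheses (fM : {morph f : x y / gmul x y}) (fV : {morph f : x / ginv x})
  (fsK : cancel s f).

Lemma morph_gone : f gone = gone.
Proof. by rewrite -(gmulV gone) fM fV gmulV. Qed.

Lemma normal_subgroup_preim (N : K -> Prop) :
  normal_subgroup N -> normal_subgroup (fun x => N (f x)).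
Proof.
case=> N1 NM NV NJ; split=> [|a b|a|g a]; rewrite ?morph_gone ?fM ?fV //.
- exact: NM.
- exact: NV.
- exact: NJ.
Qed.

Lemma has_index_preim (N : K -> Prop) k :
  has_index N k -> has_index (fun x => N (f x)) k.
Proof.
case=> r r_cosets; exists (s \o r) => x; have [i [N_i i_uniq]] := r_cosets (f x).
by exists i; split=> [|j] /=; rewrite fM fV fsK //; apply: i_uniq.
Qed.

Lemma D_le_morph (g : G) : residually_finite K -> f g <> gone -> (D g <= D (f g))%N.
Proof.
move=> rfK fg_ne1; have [N [N_nrm N_idx N_fg]] := D_witness rfK fg_ne1.
apply: (D_min (N := fun x => N (f x))) N_fg.
- by move=> g1; apply: fg_ne1; rewrite g1 morph_gone.
- exact: normal_subgroup_preim.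
- exact: has_index_preim.
Qed.

End Pullback.

Section Product.

Variables (G H : group) (y : G) (z : H).

Lemma D_pair_le_fst : residually_finite G -> y <> gone ->
  (D ((y, z) : prod_group G H) <= D y)%N.
Proof.
exact: (D_le_morph (f := fst : prod_group G H -> G) (s := fun a => (a, gone))
  (fun _ _ => erefl) (fun _ => erefl) (fun _ => erefl) (g := (y, z))).
Qed.

Lemma D_pair_le_snd : residually_finite H -> z <> gone ->
  (D ((y, z) : prod_group G H) <= D z)%N.
Proof.
exact: (D_le_morph (f := snd : prod_group G H -> H) (s := fun b => (gone, b))
  (fun _ _ => erefl) (fun _ => erefl) (fun _ => erefl) (g := (y, z))).
Qed.

Lemma D_pair_gt k : residually_finite G -> residually_finite H ->
  (k < D ((y, z) : prod_group G H))%N -> (k < D y)%N || (k < D z)%N.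
Proof.
move=> rfG rfH k_lt.
have [y1|/(D_pair_le_fst rfG)/(leq_trans k_lt) -> //] := classic (y = gone).
have [z1|/(D_pair_le_snd rfH)/(leq_trans k_lt) ->] := classic (z = gone);
  last by rewrite orbT.
have yz1 : ((y, z) : prod_group G H) = gone by rewrite y1 z1.
by move: k_lt; rewrite yz1 D_gone.
Qed.

End Product.

Theorem proposition4p6 (G H : group) (S : seq (prod_group G H)) (k n : nat) :
  finitely_generated G -> finitely_generated H ->
  residually_finite G -> residually_finite H ->
  List.NoDup S -> symmetric_set S -> generates S ->
  (walk_prob S n (fun x => (k < D x)%N)
   <= walk_prob S n (fun x => (k < D (G:=G) x.1)%N)
      + walk_prob S n (fun x => (k < D (G:=H) x.2)%N))%R.
Proof.
(* The union bound holds along every single trajectory, whatever S is. *)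
move=> _ _ rfG rfH _ _ _.
by apply: walk_prob_le_add => -[y z]; apply: D_pair_gt.
Qed.
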